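(* There is no $(2,5)$ strategy for the GKS game; equivalently, there is no $(2,5)$ subgraph of $Q_5$. In particular $k(5)\ge 3$.
   Context: The GKS game with parameter $n$ (a positive integer). A strategy pair $(S,T)$ consists of a function $S$ assigning a bit in $\{0,1\}$ to every sequence $\pi_1\pi_2\ldots\pi_i$ of distinct elements of $[n]=\{1,\dots,n\}$ with $1\le i\le n-1$, and a function $T:\{0,1\}^n\to 2^{[n]}$. For a permutation $\pi=\pi_1\ldots\pi_n$ of $[n]$ and a bit $b$, the final array $A_{\rm final}\in\{0,1\}^n$ is defined by $A_{\rm final}[\pi_i]=S(\pi_1\ldots\pi_i)$ for $1\le i\le n-1$ and $A_{\rm final}[\pi_n]=b$. The pair $(S,T)$ is a $(k,n)$ strategy if for every permutation $\pi$ of $[n]$ and every bit $b$ we have $\pi_n\in T(A_{\rm final})$, and moreover $|T(\sigma)|\le k$ for every $\sigma\in\{0,1\}^n$; $k(n)$ is the minimum such $k$. $Q_n$ is the hypercube graph on $\{0,1\}^n$. Divider–Chooser game w.r.t. a subgraph $G$ of $Q_n$: for $n-1$ rounds, the Divider picks a new coordinate $i$ and the Chooser deletes all remaining vertices with $x_i=0$ or all with $x_i=1$; the Chooser wins if the two final vertices form an edge of $G$. A $(k,n)$ subgraph is a subgraph of $Q_n$ of maximum degree at most $k$ for which the Chooser has a winning strategy. (It is known that a $(k,n)$ strategy exists iff a $(k,n)$ subgraph exists.) *)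

From mathcomp Require Import all_boot fingroup perm.
Set Implicit Arguments. Unset Strict Implicit. Unset Printing Implicit Defensive.

(* Positions/elements of [n] are represented by 'I_n (0-based). *)
Definition vertex (n : nat) := {ffun 'I_n -> bool}.

Definition perm_seq (n : nat) (p : {perm 'I_n}) : seq 'I_n :=
  [seq p i | i <- enum 'I_n].

(* A_final: A[pi_i] = S(pi_1..pi_i) for i <= n-1, A[pi_n] = b. *)
Definition final_array (n : nat) (S : seq 'I_n -> bool) (p : {perm 'I_n})
    (b : bool) : vertex n :=
  [ffun j => let m := index j (perm_seq p) in
             if m.+1 == n then b else S (take m.+1 (perm_seq p))].

(* (S,T) is a (k,n) strategy.  S is a total function on sequences, only
   its values on sequences of distinct elements of length 1..n-1 are used. *)
Definition gks_strategy (k n : nat) (S : seq 'I_n -> bool)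
    (T : vertex n -> {set 'I_n}) : Prop :=
  (forall (p : {perm 'I_n}) (b : bool) (i : 'I_n),
      i.+1 = n -> p i \in T (final_array S p b))
  /\ (forall s : vertex n, #|T s| <= k).

Definition hcube_adj (n : nat) (x y : vertex n) : bool :=
  #|[set i : 'I_n | x i != y i]| == 1.

(* A Chooser strategy: given the history of (coordinate, kept bit) moves
   and the coordinate just picked by the Divider, the bit to keep
   (i.e. the Chooser deletes all remaining vertices with x_i <> that bit). *)
Definition chooser_strategy (n : nat) := seq ('I_n * bool) -> 'I_n -> bool.

Definition play (n : nat) (C : chooser_strategy n) (d : seq 'I_n)
    : seq ('I_n * bool) :=
  foldl (fun h i => rcons h (i, C h i)) [::] d.

Definition remaining (n : nat) (h : seq ('I_n * bool)) : {set vertex n} :=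
  [set x : vertex n | all (fun ic => x ic.1 == ic.2) h].

Definition chooser_wins (n : nat) (G : rel (vertex n)) (C : chooser_strategy n)
    : Prop :=
  forall d : seq 'I_n, uniq d -> size d = n.-1 ->
    forall x y, x \in remaining (play C d) -> y \in remaining (play C d) ->
      x != y -> G x y.

Definition gks_subgraph (k n : nat) (G : rel (vertex n)) : Prop :=
  (forall x y, G x y -> hcube_adj x y)
  /\ (forall x y, G x y = G y x)
  /\ (forall x, #|[set y | G x y]| <= k)
  /\ (exists C : chooser_strategy n, chooser_wins G C).

Arguments gks_strategy k n S T : clear implicits.
Arguments gks_subgraph k n G : clear implicits.

From mathcomp Require Import all_boot fingroup perm.
From Stdlib Require Import NArith Lia.

(* A (k, n) strategy (S, T) yields a (k, n) subgraph: join x to the vertex obtained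
   by flipping its coordinate i whenever i lies in the T-sets of both.  The Chooser
   keeps the bit that S writes at the coordinate just picked; the two surviving
   vertices are then the final arrays of one permutation, so its last coordinate
   is in both T-sets.  It therefore suffices to show that the Chooser cannot win
   w.r.t. a symmetric graph of maximum degree at most 2 on Q_5.  Winning on a
   subcube with several free coordinates means that for each free coordinate the
   Chooser wins on one of its two halves.  Following this recursion we compute,
   for every subcube, a list of edge sets such that every such graph in which the
   Chooser wins on the subcube contains one of them; unions creating a vertex of
   degree 3 are discarded, and so are non-minimal sets.  For the whole of Q_5 the
   list is empty. *)

Set Implicit Arguments.
Unset Strict Implicit.
Unset Printing Implicit Defensive.

Definition flip n (x : vertex n) (i : 'I_n) : vertex n := [ffun j => (j == i) (+) x j].

Lemma flipK n (i : 'I_n) : involutive (fun x : vertex n => flip x i).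
Proof. by move=> x; apply/ffunP => j; rewrite !ffunE addbA addbb. Qed.

Lemma hcube_adj_flip n (x : vertex n) i : hcube_adj x (flip x i).
Proof.
rewrite /hcube_adj (_ : [set j | _] = [set i]) ?cards1 //.
by apply/setP => j; rewrite !inE ffunE; case: (j == i); case: (x j).
Qed.

Lemma agree_flip n (x y : vertex n) i :
  x != y -> (forall j, j != i -> x j = y j) -> y = flip x i.
Proof.
move=> neq_xy agree; have neq_xyi : x i != y i.
  apply: contra neq_xy => /eqP eq_xyi; apply/eqP/ffunP => j.
  by case: (eqVneq j i) => [->|/agree].
apply/ffunP => j; rewrite ffunE; case: eqVneq => [->|/agree //].
by move: neq_xyi; case: (x i); case: (y i).
Qed.

Lemma exists_notin n (d : seq 'I_n) : size d < n -> exists i, i \notin d.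
Proof.
move=> lt_dn; apply/existsP; rewrite -negb_forall; apply: contraTN lt_dn.
move=> /forallP /= dT; rewrite -leqNgt -{1}(card_ord n).
apply: leq_trans (card_size d); apply/subset_leq_card/subsetP => i _.
exact: dT.
Qed.

Lemma mem_perm_seq n (p : {perm 'I_n}) i : i \in perm_seq p.
Proof. by rewrite -(permKV p i); apply: map_f; rewrite mem_enum. Qed.

Lemma nth_perm_seq n (p : {perm 'I_n}) (i0 i : 'I_n) : nth i0 (perm_seq p) i = p i.
Proof. by rewrite (nth_map i0) ?size_enum_ord // nth_ord_enum. Qed.

Lemma uniq_perm_seq n (s : seq 'I_n.+1) :
  uniq s -> size s = n.+1 -> exists p : {perm 'I_n.+1}, perm_seq p = s.
Proof.
move=> uniq_s size_s.
have inj_nth : injective (fun i : 'I_n.+1 => nth ord0 s i).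
  by move=> i j /eqP; rewrite nth_uniq ?size_s // => /eqP/val_inj.
exists (perm inj_nth); rewrite /perm_seq (eq_map (permE inj_nth)).
rewrite (map_comp (nth ord0 s) val) val_enum_ord.
by have := mkseq_nth ord0 s; rewrite size_s.
Qed.

Lemma play_rcons n (C : chooser_strategy n) d i :
  play C (rcons d i) = rcons (play C d) (i, C (play C d) i).
Proof. by rewrite /play -cats1 foldl_cat. Qed.

Lemma play_fst n (C : chooser_strategy n) d : map fst (play C d) = d.
Proof. by elim/last_ind: d => [|d i IH] //; rewrite play_rcons map_rcons IH. Qed.

Lemma final_array_rcons n (S : seq 'I_n.+1 -> bool) p d m (z : vertex n.+1) :
    perm_seq p = rcons d m -> size d = n ->
    (forall j, j \in d -> z j = S (take (index j d).+1 d)) ->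
  final_array S p (z m) = z.
Proof.
move=> pdm size_d zS; apply/ffunP => j; rewrite ffunE pdm -cats1 index_cat.
case: ifP => [jd|jNd].
  have lt_jd : index j d < n by rewrite -index_mem size_d in jd.
  by rewrite /= eqSS ltn_eqF // takel_cat ?index_mem // zS.
have : j \in rcons d m by rewrite -pdm mem_perm_seq.
by rewrite mem_rcons in_cons jNd orbF => /eqP->; rewrite /= eqxx addn0 size_d eqxx.
Qed.

Section StrategyGraph.

Variables (n k : nat) (S : seq 'I_n.+1 -> bool) (T : vertex n.+1 -> {set 'I_n.+1}).
Hypothesis ST : gks_strategy k n.+1 S T.

Definition strategy_graph (x y : vertex n.+1) : bool :=
  [exists i in T x :&: T y, y == flip x i].

Definition strategy_chooser : chooser_strategy n.+1 :=
  fun h i => S (rcons (map fst h) i).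

Lemma strategy_graph_sym x y : strategy_graph x y = strategy_graph y x.
Proof.
suff sub u v : strategy_graph u v -> strategy_graph v u by apply/idP/idP; apply: sub.
case/exists_inP => i Ti /eqP def_v; subst v; apply/exists_inP; exists i.
  by rewrite setIC.
by rewrite flipK.
Qed.

Lemma strategy_graph_adj x y : strategy_graph x y -> hcube_adj x y.
Proof. by case/exists_inP => i _ /eqP->; apply: hcube_adj_flip. Qed.

Lemma strategy_graph_deg x : #|[set y | strategy_graph x y]| <= k.
Proof.
apply: leq_trans (proj2 ST x); apply: leq_trans (leq_imset_card (flip x) _).
apply/subset_leq_card/subsetP => y; rewrite inE => /exists_inP[i].
by rewrite inE => /andP[Txi _] /eqP->; apply: imset_f.
Qed.

Lemma strategy_play_entry d j :
  j < size d -> (nth ord0 d j, S (take j.+1 d)) \in play strategy_chooser d.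
Proof.
elim/last_ind: d j => [|d i IH] j //; rewrite size_rcons ltnS leq_eqVlt.
rewrite play_rcons mem_rcons in_cons => /orP[/eqP->|lt_jd].
  by rewrite nth_rcons ltnn eqxx take_oversize ?size_rcons // /strategy_chooser play_fst eqxx.
by rewrite nth_rcons lt_jd -cats1 takel_cat // IH ?orbT.
Qed.

Lemma remaining_strategy_play d z : z \in remaining (play strategy_chooser d) ->
  forall j, j \in d -> z j = S (take (index j d).+1 d).
Proof.
rewrite inE => /allP zd j jd; rewrite -index_mem in jd.
by move/eqP: (zd _ (strategy_play_entry jd)); rewrite /= nth_index // -index_mem.
Qed.

Lemma strategy_chooser_wins : chooser_wins strategy_graph strategy_chooser.
Proof.
move=> d uniq_d size_d x y xd yd neq_xy.
have [m mNd] : exists m, m \notin d by apply: exists_notin; rewrite size_d.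
have [p pdm] : exists p : {perm 'I_n.+1}, perm_seq p = rcons d m.
  by apply: uniq_perm_seq; rewrite ?rcons_uniq ?mNd // size_rcons size_d.
have pmax : p ord_max = m by rewrite -(nth_perm_seq p ord0) pdm nth_rcons size_d ltnn eqxx.
have Tm z : z \in remaining (play strategy_chooser d) -> m \in T z.
  move=> zd; rewrite -pmax -(final_array_rcons pdm size_d (remaining_strategy_play zd)).
  exact: (proj1 ST).
have agree j : j != m -> x j = y j.
  have : j \in rcons d m by rewrite -pdm mem_perm_seq.
  rewrite mem_rcons in_cons => /orP[/eqP-> /eqP//|jd _].
  by rewrite (remaining_strategy_play xd jd) (remaining_strategy_play yd jd).
apply/exists_inP; exists m; first by rewrite inE !Tm.
by rewrite -(agree_flip neq_xy agree).
Qed.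

Lemma gks_strategy_subgraph : gks_subgraph k n.+1 strategy_graph.
Proof.
split; first exact: strategy_graph_adj.
split; first exact: strategy_graph_sym.
split; first exact: strategy_graph_deg.
by exists strategy_chooser; apply: strategy_chooser_wins.
Qed.

End StrategyGraph.

(* [None] marks a free coordinate. *)
Definition subcube := seq (option bool).

Section Subcubes.

Variables (n : nat) (G : rel (vertex n)).

Definition subcube_vertex (c : subcube) (b : bool) : vertex n :=
  [ffun i : 'I_n => odflt b (nth None c i)].

(* Here [c] has m.+1 free coordinates. *)
Fixpoint chooser_wins_on (m : nat) (c : subcube) : Prop :=
  if m is m'.+1 then
    forall i : 'I_n, nth None c i = None ->
      exists b, chooser_wins_on m' (set_nth None c i (Some b))
  else G (subcube_vertex c false) (subcube_vertex c true).

Fixpoint history_bit (h : seq ('I_n * bool)) (i : nat) : option bool :=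
  if h is ic :: h' then if val ic.1 == i then Some ic.2 else history_bit h' i
  else None.

Definition history_subcube (h : seq ('I_n * bool)) : subcube := mkseq (history_bit h) n.

Lemma history_bit_rcons h j b i : history_bit (rcons h (j, b)) i =
  if history_bit h i is Some x then Some x else if val j == i then Some b else None.
Proof. by elim: h => [|ic h IH] //=; case: ifP. Qed.

Lemma history_bit_None h (i : 'I_n) : (history_bit h i == None) = (i \notin map fst h).
Proof.
elim: h => [|[j b] h IH] //=; rewrite in_cons negb_or -IH val_eqE.
by case: (eqVneq j i) => [_|/negbTE neq_i]; rewrite ?eqxx // eq_sym neq_i.
Qed.

Lemma history_bit_play (C : chooser_strategy n) d (i : 'I_n) :
  (history_bit (play C d) i == None) = (i \notin d).
Proof. by rewrite history_bit_None play_fst. Qed.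

Lemma history_bit_Some h ic :
  uniq (map fst h) -> ic \in h -> history_bit h ic.1 = Some ic.2.
Proof.
elim: h => [|ic' h IH] //= /andP[ic'Nh uniq_h]; rewrite in_cons.
case/orP => [/eqP->|ic_h]; first by rewrite eqxx.
case: eqP => [/val_inj eq_ic|_]; last exact: IH.
by move: ic'Nh; rewrite eq_ic map_f.
Qed.

Lemma history_subcube_vertex h b :
  uniq (map fst h) -> subcube_vertex (history_subcube h) b \in remaining h.
Proof.
move=> uniq_h; rewrite inE; apply/allP => ic ic_h.
by rewrite ffunE nth_mkseq // (history_bit_Some uniq_h ic_h).
Qed.

Lemma history_subcube_rcons (C : chooser_strategy n) d i : i \notin d ->
  history_subcube (play C (rcons d i)) =
  set_nth None (history_subcube (play C d)) i (Some (C (play C d) i)).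
Proof.
rewrite -(history_bit_play C) => /eqP free_i.
apply: (@eq_from_nth _ None); first by rewrite size_set_nth !size_mkseq; apply/esym/maxn_idPr.
move=> j; rewrite size_mkseq => lt_jn.
rewrite nth_set_nth /= !nth_mkseq // play_rcons history_bit_rcons.
case: (eqVneq (val i) j) => [<-|_]; first by rewrite free_i ?eqxx.
by case: history_bit.
Qed.

Lemma chooser_wins_on_play (C : chooser_strategy n) : chooser_wins G C ->
  forall m d, uniq d -> size d + m.+1 = n -> chooser_wins_on m (history_subcube (play C d)).
Proof.
move=> C_wins; elim=> [|m IH] d uniq_d size_d /=.
  have uniq_h : uniq (map fst (play C d)) by rewrite play_fst.
  have vertex_h b := history_subcube_vertex b uniq_h.
  apply: C_wins uniq_d _ _ _ (vertex_h false) (vertex_h true) _.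
    by rewrite -[in RHS]size_d addn1.
  have [i iNd] : exists i, i \notin d by apply: exists_notin; rewrite -[X in _ < X]size_d addn1.
  move: iNd; rewrite -(history_bit_play C) => /eqP free_i.
  by apply/negP => /eqP/ffunP/(_ i); rewrite !ffunE nth_mkseq // free_i.
move=> i free_i; exists (C (play C d) i).
have iNd : i \notin d.
  by move: free_i; rewrite nth_mkseq // -(history_bit_play C) => ->.
rewrite -history_subcube_rcons //; apply: IH; first by rewrite rcons_uniq iNd.
by rewrite size_rcons addSnnS.
Qed.

End Subcubes.

Fixpoint subcubes (m : nat) : seq subcube :=
  if m is m'.+1 then [seq o :: c | o <- [:: None; Some false; Some true], c <- subcubes m']
  else [:: [::]].

Lemma mem_subcubes c : c \in subcubes (size c).
Proof. by elim: c => [|o c IH] //=; case: o => [[]|]; rewrite !mem_cat map_f ?orbT. Qed.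

Lemma count_set_nth_None (c : subcube) i b : i < size c -> nth None c i = None ->
  count_mem None c = (count_mem None (set_nth None c i (Some b))).+1.
Proof. by elim: c i => [|o c IH] [|i] //= lt_ic; [move->|move/(IH i lt_ic)->; rewrite addnS]. Qed.

Section SortedLists.

Local Open Scope N_scope.

Fixpoint count_common (ks : seq N) : seq N -> nat :=
  if ks is k :: ks' then
    fix count_common_k (u : seq N) : nat :=
      if u is l :: u' then
        if k == l then (count_common ks' u').+1
        else if k <? l then count_common ks' u else count_common_k u'
      else 0
  else fun=> 0%nat.

Fixpoint sorted_union (a : seq N) : seq N -> seq N :=
  if a is x :: a' then
    fix union_x (b : seq N) : seq N :=
      if b is y :: b' then
        if x <? y then x :: sorted_union a' b
        else if y <? x then y :: union_x b'
        else x :: sorted_union a' b'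
      else a
  else id.

Lemma count_common_le ks u : (count_common ks u <= count (mem u) ks)%nat.
Proof.
elim: ks u => [|k ks IH] u //=; elim: u => [|l u IHu] //=.
have sub_u : (count (mem u) ks <= count (mem (l :: u)) ks)%nat.
  by apply: sub_count => x /=; rewrite in_cons orbC => ->.
case: eqVneq => [->|_]; first by rewrite in_cons eqxx ltnS (leq_trans (IH u)).
case: ifP => _; first exact: leq_trans (IH _) (leq_addl _ _).
by apply: leq_trans IHu _; rewrite leq_add // in_cons; case: (k \in u); rewrite ?orbT.
Qed.

Lemma mem_sorted_union a b x : (x \in sorted_union a b) = (x \in a) || (x \in b).
Proof.
elim: a b => [|y a IH] b //=; elim: b => [|z b IHb] /=; first by rewrite orbF.
case: ifP => [_|/N.ltb_ge ge_yz]; first by rewrite in_cons IH -orbA.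
case: ifP => [_|/N.ltb_ge ge_zy]; first by rewrite in_cons IHb !in_cons orbCA.
rewrite (N.le_antisymm _ _ ge_yz ge_zy) in_cons IH !in_cons.
by case: (x == y).
Qed.

Lemma all_sorted_union (P : pred N) a b : all P (sorted_union a b) = all P a && all P b.
Proof. by rewrite -all_cat; apply: eq_all_r => x; rewrite mem_sorted_union mem_cat. Qed.

End SortedLists.

Section Q5.

Local Open Scope N_scope.

(* Vertex codes are the integers < 32 read in binary; the edge in direction i whose
   lower endpoint has code w gets the code 8 * w + i. *)
Definition code_bits (w : N) : seq bool := [seq N.testbit w (N.of_nat i) | i <- iota 0 5].
Definition code_vertex (w : N) : vertex 5 := [ffun i : 'I_5 => nth false (code_bits w) i].
Definition vertex_bits (x : vertex 5) : seq bool := [seq x i | i <- enum 'I_5].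

Definition edge_lo (k : N) : N := k / 8.
Definition edge_hi (k : N) : N := N.setbit (k / 8) (k mod 8).
Definition edge_ends (k : N) : seq N := [:: edge_lo k; edge_hi k].
Definition other_end (w k : N) : N := if edge_lo k == w then edge_hi k else edge_lo k.

Definition coded_edge (G : rel (vertex 5)) (k : N) : bool :=
  G (code_vertex (edge_lo k)) (code_vertex (edge_hi k)).

Fixpoint corner_code (c : subcube) : N :=
  if c is o :: c' then N.b2n (odflt false o) + 2 * corner_code c' else 0.

Definition edge_code (c : subcube) : N := 8 * corner_code c + N.of_nat (index None c).

Definition incident_codes (w : N) : seq N :=
  sort N.leb [seq 8 * N.clearbit w i + i | i <- [:: 0; 1; 2; 3; 4]].

(* The checks compare bit lists: equality of finite functions does not compute. *)
Lemma edge_code_ends : all (fun c => (count_mem None c == 1)%nat ==>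
    (code_bits (edge_lo (edge_code c)) == map (odflt false) c) &&
    (code_bits (edge_hi (edge_code c)) == map (odflt true) c)) (subcubes 5).
Proof. by vm_compute. Qed.

Lemma incident_codes_star : all (fun w =>
    all (fun k => w \in edge_ends k) (incident_codes w) &&
    uniq [seq code_bits (other_end w k) | k <- incident_codes w])
  [seq N.of_nat w | w <- iota 0 32].
Proof. by vm_compute. Qed.

Lemma code_vertexK w : vertex_bits (code_vertex w) = code_bits w.
Proof.
rewrite /vertex_bits (eq_map (fun i => ffunE _ i)) (map_comp (nth false _) val) val_enum_ord.
by have := mkseq_nth false (code_bits w); rewrite size_map size_iota.
Qed.

Lemma code_vertex_subcube w c b :
  size c = 5%nat -> code_bits w = map (odflt b) c -> code_vertex w = subcube_vertex 5 c b.
Proof. by move=> size_c bits_w; apply/ffunP => i; rewrite !ffunE bits_w (nth_map None) ?size_c. Qed.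

Lemma coded_edge_code G c : size c = 5%nat -> count_mem None c = 1%nat ->
  coded_edge G (edge_code c) = G (subcube_vertex 5 c false) (subcube_vertex 5 c true).
Proof.
move=> size_c one_free; have c_5 : c \in subcubes 5 by rewrite -size_c mem_subcubes.
have /andP[/eqP lo /eqP hi] := implyP (allP edge_code_ends c c_5) (introT eqP one_free).
by rewrite /coded_edge (code_vertex_subcube size_c lo) (code_vertex_subcube size_c hi).
Qed.

(* Only the stars of the vertices touched by b are checked; this keeps the search
   fast, and checking any set of stars is sound. *)
Definition stars (b : seq N) : seq (seq N) :=
  [seq incident_codes w | w <- undup (flatten (map edge_ends b)) & w <? 32].

Definition degree_ok (tb : seq (seq N)) (u : seq N) : bool :=
  all (fun ks => count_common ks u <= 2)%nat tb.

Definition extend (acc L : seq (seq N)) : seq (seq N) :=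
  flatten [seq (let tb := stars b in
                [seq u <- [seq sorted_union a b | a <- acc] | degree_ok tb u]) | b <- L].

Definition minimal (L : seq (seq N)) : seq (seq N) :=
  let S := [seq (size x, x) | x <- undup L] in
  [seq p.2 | p <- S & ~~ has (fun q => (q.1 < p.1)%nat && subseq q.2 p.2) S].

Definition step (R : subcube -> seq (seq N)) (c : subcube) (acc : seq (seq N)) (i : nat) :=
  if nth None c i is None then
    minimal (extend acc (R (set_nth None c i (Some false)) ++ R (set_nth None c i (Some true))))
  else acc.

Fixpoint certificates (m : nat) (c : subcube) : seq (seq N) :=
  if m is m'.+1 then foldl (step (certificates m') c) [:: [::]] (iota 0 5)
  else [:: [:: edge_code c]].

(* The kernel evaluates the conversion when the proof is checked. *)
Lemma certificates_cube : certificates 4 (nseq 5 None) = [::].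
Proof. vm_cast_no_check (erefl (@nil (seq N))). Qed.

Lemma mem_extend acc L a b : a \in acc -> b \in L ->
  degree_ok (stars b) (sorted_union a b) -> sorted_union a b \in extend acc L.
Proof.
move=> a_acc b_L deg_ab; apply/flattenP.
exists [seq u <- [seq sorted_union a' b | a' <- acc] | degree_ok (stars b) u].
  exact: (map_f (fun b => let tb := stars b in _) b_L).
by rewrite mem_filter deg_ab (map_f (fun a' => sorted_union a' b)).
Qed.

Lemma minimal_sound L x : x \in L -> exists2 y, y \in minimal L & subseq y x.
Proof.
rewrite -mem_undup; elim: (size x).+1 {-2}x (ltnSn (size x)) => // n IH {}x lt_xn x_L.
case sub_x : (has (fun q => (q.1 < size x)%nat && subseq q.2 x) [seq (size y, y) | y <- undup L]).
  case/hasP: sub_x => _ /mapP[y y_L ->] /= /andP[lt_yx sub_yx].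
  have [z z_min sub_zy] := IH y (leq_trans lt_yx lt_xn) y_L.
  by exists z => //; apply: subseq_trans sub_zy sub_yx.
exists x => //; apply/mapP; exists (size x, x) => //.
by rewrite mem_filter /= sub_x (map_f (fun y => (size y, y))).
Qed.

Section Degree2.

Variable G : rel (vertex 5).
Hypothesis G_sym : forall x y, G x y = G y x.
Hypothesis G_deg2 : forall x, (#|[set y | G x y]| <= 2)%nat.

Lemma count_incident_le w u :
  w <? 32 -> all (coded_edge G) u -> (count (mem u) (incident_codes w) <= 2)%nat.
Proof.
move=> lt_w32 uG; have w_cube : w \in [seq N.of_nat i | i <- iota 0 32].
  apply/mapP; exists (N.to_nat w); last by rewrite N2Nat.id.
  by rewrite mem_iota leq0n add0n; apply/ltP; move/N.ltb_lt: lt_w32; lia.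
have /andP[w_ends uniq_bits] := allP incident_codes_star w w_cube.
set ks := incident_codes w in w_ends uniq_bits *; rewrite -size_filter.
set nbr := fun k => code_vertex (other_end w k).
have uniq_nbrs : uniq (map nbr (filter (mem u) ks)).
  apply: (@map_uniq _ _ vertex_bits); rewrite -map_comp (eq_map (fun k => code_vertexK _)).
  exact: subseq_uniq (map_subseq _ (filter_subseq _ _)) uniq_bits.
rewrite -(size_map nbr) -(card_uniqP uniq_nbrs); apply: leq_trans (G_deg2 (code_vertex w)).
apply/subset_leq_card/subsetP => y /mapP[k]; rewrite mem_filter => /andP[k_u k_w] ->.
rewrite inE /nbr /other_end; have := allP uG k k_u; rewrite /coded_edge.
case: eqVneq => [->//|neq_lo]; have := allP w_ends k k_w.
by rewrite !inE eq_sym (negbTE neq_lo) => /eqP->; rewrite G_sym.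
Qed.

Lemma degree_ok_stars b u : all (coded_edge G) u -> degree_ok (stars b) u.
Proof.
move=> uG; apply/allP => ks /mapP[w]; rewrite mem_filter => /andP[lt_w32 _] ->.
exact: leq_trans (count_common_le _ _) (count_incident_le lt_w32 uG).
Qed.

Lemma step_sound R c acc i :
    (nth None c i = None -> exists b,
       exists2 u, u \in R (set_nth None c i (Some b)) & all (coded_edge G) u) ->
    (exists2 a, a \in acc & all (coded_edge G) a) ->
  exists2 u, u \in step R c acc i & all (coded_edge G) u.
Proof.
rewrite /step => cert_i [a a_acc aG]; case: (nth None c i) cert_i => [?|] cert_i.
  by exists a.
have [b [v v_R vG]] := cert_i erefl.
have abG : all (coded_edge G) (sorted_union a v) by rewrite all_sorted_union aG.
have v_R' : v \in R (set_nth None c i (Some false)) ++ R (set_nth None c i (Some true)).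
  by rewrite mem_cat; case: b v_R => ->; rewrite ?orbT.
have [y y_min sub_y] := minimal_sound (mem_extend a_acc v_R' (degree_ok_stars _ abG)).
by exists y => //; apply/allP => k /(mem_subseq sub_y)/(allP abG).
Qed.

Lemma certificates_sound m c : size c = 5%nat -> count_mem None c = m.+1 ->
  chooser_wins_on G m c -> exists2 u, u \in certificates m c & all (coded_edge G) u.
Proof.
elim: m c => [|m IH] c size_c free_c /= c_wins.
  by exists [:: edge_code c]; rewrite ?inE //= andbT coded_edge_code.
have step_i i acc : (i < 5)%nat -> (exists2 a, a \in acc & all (coded_edge G) a) ->
    exists2 u, u \in step (certificates m) c acc i & all (coded_edge G) u.
  move=> lt_i5; apply: step_sound => free_i.
  have [b wins_b] := c_wins (Ordinal lt_i5) free_i; exists b; apply: IH wins_b.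
    by rewrite size_set_nth size_c; apply/maxn_idPr.
  by move: free_c; rewrite (@count_set_nth_None c i b) ?size_c // => -[].
by do 5!apply: (step_i) => //; exists [::].
Qed.

Theorem no_winning_chooser (C : chooser_strategy 5) : ~ chooser_wins G C.
Proof.
move/chooser_wins_on_play/(_ 4 [::] isT erefl) => wins.
have [u] := certificates_sound (c := nseq 5 None) erefl erefl wins.
by rewrite certificates_cube.
Qed.

End Degree2.

End Q5.

Lemma gks_subgraph_Q5_ge3 k (G : rel (vertex 5)) : gks_subgraph k 5 G -> 3 <= k.
Proof.
case=> _ [G_sym [G_deg [C C_wins]]]; rewrite ltnNge; apply/negP => le_k2.
by apply: (no_winning_chooser G_sym _ C_wins) => x; apply: leq_trans (G_deg x) le_k2.
Qed.

Theorem lemma7 :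
  (forall (k : nat) (S : seq 'I_5 -> bool) (T : vertex 5 -> {set 'I_5}),
      gks_strategy k 5 S T -> 3 <= k)
  /\ (forall (k : nat) (G : rel (vertex 5)), gks_subgraph k 5 G -> 3 <= k).
Proof.
split=> [k S T /gks_strategy_subgraph|k G]; exact: gks_subgraph_Q5_ge3.
Qed.
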